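(* Let $\rho\geqslant 2$ be an integer, let $(\mathcal{N}_n)_{n\geqslant 0}$ be Narayana's sequence, and let $\alpha\approx 1.46557$ be the unique real root of $x^3-x^2-1$. Suppose that non-negative integers $n,d_1,d_2,d_3,\ell,m,k$ satisfy $1\leqslant k\leqslant m\leqslant \ell$, $d_1,d_2,d_3\in\{0,1,\ldots,\rho-1\}$, $d_1>0$, and $$\mathcal{N}_n=d_1\frac{\rho^\ell-1}{\rho-1}\rho^{m+k}+d_2\frac{\rho^m-1}{\rho-1}\rho^{k}+d_3\frac{\rho^k-1}{\rho-1}.$$ Then $$(\ell+m+k-1)\log\rho+\log\alpha<n\log\alpha<(\ell+m+k)\log\rho+1.$$
   Context: Narayana's sequence is defined by $\mathcal{N}_0=0$, $\mathcal{N}_1=\mathcal{N}_2=1$ and $\mathcal{N}_n=\mathcal{N}_{n-1}+\mathcal{N}_{n-3}$ for $n\geqslant 3$. The right-hand side of the equation is the number whose base-$\rho$ representation consists of $\ell$ digits $d_1$, then $m$ digits $d_2$, then $k$ digits $d_3$. $\log$ is the natural logarithm. *)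

From Stdlib Require Import Reals Lra Lia.
Open Scope R_scope.

Fixpoint narayana (n : nat) : nat :=
  match n with
  | O => 0
  | S O => 1
  | S (S O) => 1
  | S ((S (S p)) as q) => (narayana q + narayana p)%nat
  end.

(* Write L = l + m + k.  The right-hand side lies in [rho^(L-1), rho^L): its
   leading block contributes at least rho^(l-1) rho^(m+k), and with all digits
   equal to rho - 1 the three blocks telescope to rho^L - 1.  On the other side
   the sequences N_n, alpha^n and their differences all satisfy Narayana's
   recurrence, so positivity of a difference at three consecutive indices
   propagates; this yields N_n alpha < alpha^n for n >= 3 and
   (2/5) alpha^n <= N_n for n >= 6.  Since 5/2 < e, taking logarithms gives
   both inequalities. *)

From Stdlib Require Import Reals Lra Lia Psatz.
Open Scope R_scope.

Definition narayana_rec (w : nat -> R) : Prop :=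
  forall p, w (p + 3)%nat = w (p + 2)%nat + w p.

Lemma narayana_rec_INR : narayana_rec (fun n => INR (narayana n)).
Proof.
  intro p.
  replace (p + 3)%nat with (S (S (S p))) by lia.
  replace (p + 2)%nat with (S (S p)) by lia.
  simpl narayana; rewrite plus_INR; reflexivity.
Qed.

Lemma narayana_rec_pow (a : R) : a ^ 3 = a ^ 2 + 1 -> narayana_rec (pow a).
Proof. intros E p; rewrite !pow_add, E; ring. Qed.

Lemma narayana_rec_sub_scal (u v : nat -> R) (c : R) :
  narayana_rec u -> narayana_rec v -> narayana_rec (fun n => u n - c * v n).
Proof. intros Hu Hv p; rewrite Hu, Hv; ring. Qed.

Lemma narayana_rec_ind (P : R -> Prop) (w : nat -> R) (n0 : nat) :
  (forall x y, P x -> P y -> P (x + y)) -> narayana_rec w ->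
  P (w n0) -> P (w (n0 + 1)%nat) -> P (w (n0 + 2)%nat) ->
  forall n, (n0 <= n)%nat -> P (w n).
Proof.
  intros Padd Hw H0 H1 H2.
  assert (Hwin : forall p, P (w (n0 + p)%nat) /\ P (w (n0 + p + 1)%nat)
                           /\ P (w (n0 + p + 2)%nat)).
  { induction p as [|p [I0 [I1 I2]]].
    - rewrite Nat.add_0_r; auto.
    - replace (n0 + S p)%nat with (n0 + p + 1)%nat by lia.
      replace (n0 + p + 1 + 1)%nat with (n0 + p + 2)%nat by lia.
      replace (n0 + p + 1 + 2)%nat with (n0 + p + 3)%nat by lia.
      rewrite Hw; auto. }
  intros n Hn; replace n with (n0 + (n - n0))%nat by lia; apply Hwin.
Qed.

Lemma narayana_root_bounds (a : R) : a ^ 3 - a ^ 2 - 1 = 0 -> 1 < a < 1.47.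
Proof.
  intro Ha.
  assert (E : a ^ 2 * (a - 1) = 1) by lra.
  assert (0 <= a ^ 2) by apply pow2_ge_0.
  split; [nra|].
  destruct (Rlt_le_dec a 1.47) as [h|h]; [exact h|].
  assert (2.1609 <= a ^ 2) by nra.
  nra.
Qed.

Section NarayanaVsRoot.

Variable a : R.
Hypothesis root : a ^ 3 = a ^ 2 + 1.
Hypothesis a_gt1 : 1 < a.

Lemma narayana_mul_root_lt_pow n : (3 <= n)%nat -> INR (narayana n) * a < a ^ n.
Proof.
  intro Hn.
  enough (0 < a ^ n - a * INR (narayana n)) by lra.
  apply (narayana_rec_ind (Rlt 0) (fun n => a ^ n - a * INR (narayana n)) 3);
    [intros; lra | apply narayana_rec_sub_scal;
                   [apply narayana_rec_pow, root | apply narayana_rec_INR]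
    | | | | exact Hn]; simpl; nra.
Qed.

Hypothesis a_lt : a < 1.47.

(* 2/5 must lie between 1/e and 4 / alpha^6 ~ 0.404, the latter from n = 6. *)

Lemma pow_root_le_narayana n : (6 <= n)%nat -> 2 / 5 * a ^ n <= INR (narayana n).
Proof.
  intro Hn.
  enough (0 <= INR (narayana n) - 2 / 5 * a ^ n) by lra.
  assert (a ^ 2 < 2.1609) by nra.
  apply (narayana_rec_ind (Rle 0) (fun n => INR (narayana n) - 2 / 5 * a ^ n) 6);
    [intros; lra | apply narayana_rec_sub_scal;
                   [apply narayana_rec_INR | apply narayana_rec_pow, root]
    | | | | exact Hn]; simpl narayana; simpl Nat.add.
  - replace (a ^ 6) with ((a ^ 3) ^ 2) by ring; rewrite root; simpl; nra.
  - replace (a ^ 7) with ((a ^ 3) ^ 2 * a) by ring; rewrite root; simpl; nra.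
  - replace (a ^ 8) with ((a ^ 3) ^ 2 * a ^ 2) by ring; rewrite root; simpl; nra.
Qed.

End NarayanaVsRoot.

Lemma ge6_of_narayana_ge4 n : 4 <= INR (narayana n) -> (6 <= n)%nat.
Proof.
  intro H.
  destruct (Nat.le_gt_cases 6 n) as [h|h]; [exact h|].
  exfalso.
  do 6 (destruct n as [|n]; [simpl in H; lra|]).
  lia.
Qed.

Definition repunit (r : R) (j : nat) : R := (r ^ j - 1) / (r - 1).

Lemma repunit_mul_pred r j : r <> 1 -> repunit r j * (r - 1) = r ^ j - 1.
Proof. intro Hr; unfold repunit; field; lra. Qed.

Lemma repunit_ge0 r j : 1 < r -> 0 <= repunit r j.
Proof.
  intro Hr; unfold repunit.
  assert (1 <= r ^ j) by (apply pow_R1_Rle; lra).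
  apply Rmult_le_pos; [lra | apply Rlt_le, Rinv_0_lt_compat; lra].
Qed.

Lemma pow_pred_le_repunit r j : 1 < r -> (1 <= j)%nat -> r ^ (j - 1) <= repunit r j.
Proof.
  intros Hr Hj.
  assert (1 <= r ^ (j - 1)) by (apply pow_R1_Rle; lra).
  assert (Hpow : r ^ j = r ^ (j - 1) * r)
    by (replace j with (S (j - 1)) at 1 by lia; simpl; ring).
  unfold repunit; apply Rmult_le_reg_r with (r - 1); [lra|].
  field_simplify; lra.
Qed.

Lemma repdigit_blocks_bounds (r d1 d2 d3 : R) (l m k : nat) :
  1 < r -> 1 <= d1 <= r - 1 -> 0 <= d2 <= r - 1 -> 0 <= d3 <= r - 1 ->
  (1 <= l)%nat ->
  let V := d1 * repunit r l * r ^ (m + k) + d2 * repunit r m * r ^ k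
           + d3 * repunit r k in
  r ^ (l + m + k - 1) <= V <= r ^ (l + m + k) - 1.
Proof.
  intros Hr Hd1 Hd2 Hd3 Hl V.
  assert (Rl := repunit_mul_pred r l ltac:(lra)).
  assert (Rm := repunit_mul_pred r m ltac:(lra)).
  assert (Rk := repunit_mul_pred r k ltac:(lra)).
  assert (Gl := repunit_ge0 r l Hr).
  assert (Gm := repunit_ge0 r m Hr).
  assert (Gk := repunit_ge0 r k Hr).
  assert (Pl := pow_pred_le_repunit r l Hr Hl).
  assert (Pmk : 0 < r ^ (m + k)) by (apply pow_lt; lra).
  assert (Pk : 0 < r ^ k) by (apply pow_lt; lra).
  split.
  - replace (l + m + k - 1)%nat with (l - 1 + (m + k))%nat by lia.
    rewrite pow_add; unfold V.
    assert (0 <= d2 * repunit r m * r ^ k) by (apply Rmult_le_pos; nra).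
    assert (0 <= d3 * repunit r k) by nra.
    assert (0 <= repunit r l * r ^ (m + k)) by nra.
    assert (r ^ (l - 1) * r ^ (m + k) <= repunit r l * r ^ (m + k)) by nra.
    nra.
  - replace (r ^ (l + m + k) - 1)
      with (repunit r l * (r - 1) * r ^ (m + k) + repunit r m * (r - 1) * r ^ k
            + repunit r k * (r - 1))
      by (rewrite Rl, Rm, Rk, !pow_add; ring).
    unfold V.
    apply Rplus_le_compat; [apply Rplus_le_compat|].
    + apply Rmult_le_compat_r; nra.
    + apply Rmult_le_compat_r; nra.
    + nra.
Qed.

Lemma INR_le_pred_of_lt (d b : nat) : (d < b)%nat -> INR d <= INR b - 1.
Proof. intro H; apply le_INR in H; rewrite S_INR in H; lra. Qed.

Lemma exp1_gt_5_2 : 5 / 2 < exp 1.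
Proof.
  assert (H := exp_ineq1 (1 / 8) ltac:(lra)).
  replace 1 with (1/8 + 1/8 + 1/8 + 1/8 + 1/8 + 1/8 + 1/8 + 1/8) by field.
  rewrite !exp_plus.
  assert (1.125 ^ 8 <= exp (1 / 8) ^ 8) by (apply pow_incr; lra).
  simpl in *; lra.
Qed.

Theorem lemma3p1 (rho n d1 d2 d3 l m k : nat) (alpha : R) :
  (2 <= rho)%nat ->
  alpha ^ 3 - alpha ^ 2 - 1 = 0 ->
  (1 <= k)%nat -> (k <= m)%nat -> (m <= l)%nat ->
  (d1 < rho)%nat -> (d2 < rho)%nat -> (d3 < rho)%nat -> (0 < d1)%nat ->
  let r := INR rho in
  INR (narayana n) =
    INR d1 * ((r ^ l - 1) / (r - 1)) * r ^ (m + k)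
    + INR d2 * ((r ^ m - 1) / (r - 1)) * r ^ k
    + INR d3 * ((r ^ k - 1) / (r - 1)) ->
  INR (l + m + k - 1) * ln r + ln alpha < INR n * ln alpha /\
  INR n * ln alpha < INR (l + m + k) * ln r + 1.
Proof.
  intros Hrho Ha Hk Hkm Hml Hd1 Hd2 Hd3 Hd1p r HN.
  destruct (narayana_root_bounds alpha Ha) as [Ha1 Ha2].
  assert (Hroot : alpha ^ 3 = alpha ^ 2 + 1) by lra.
  assert (Hr : 2 <= r) by (apply (le_INR 2); lia).
  assert (Hd1r : 1 <= INR d1) by (apply (le_INR 1); lia).
  assert (Hd : forall d, (d < rho)%nat -> 0 <= INR d <= r - 1)
    by (intros d Hd; split; [apply pos_INR | apply INR_le_pred_of_lt, Hd]).
  destruct (repdigit_blocks_bounds r (INR d1) (INR d2) (INR d3) l m k)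
    as [Vlo Vup]; [lra | split; [lra | apply Hd, Hd1] | apply Hd, Hd2 | apply Hd, Hd3 | lia |].
  fold (repunit r l) (repunit r m) (repunit r k) in HN; rewrite <- HN in Vlo, Vup.
  assert (Hr2 : r ^ 2 <= r ^ (l + m + k - 1)) by (apply Rle_pow; lra || lia).
  assert (Hn := ge6_of_narayana_ge4 n ltac:(simpl in Hr2; nra)).
  assert (Up := narayana_mul_root_lt_pow alpha Hroot Ha1 n ltac:(lia)).
  assert (Lo := pow_root_le_narayana alpha Hroot Ha1 Ha2 n Hn).
  assert (0 < r ^ (l + m + k - 1)) by (apply pow_lt; lra).
  assert (E := exp1_gt_5_2).
  rewrite <- !ln_pow by lra.
  split.
  - rewrite <- ln_mult by lra; apply ln_increasing; nra.
  - rewrite <- (ln_exp 1), Rplus_comm, <- ln_mult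
      by (apply exp_pos || apply pow_lt; lra).
    apply ln_increasing; [apply pow_lt; lra | nra].
Qed.
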